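(* Let $R$ be a commutative domain with field of fractions $F$, and let $A\in R^{n\times n}$ have rank $r\ge1$ with $\alpha^i\ne0$ for $i=1,\dots,r$. Let $L$ be the $n\times n$ matrix whose first $r$ columns are $(\alpha^j_{i,j})_{i=1..n,\,j=1..r}$ and whose last $n-r$ columns are the standard basis vectors $e_{r+1},\dots,e_n$; let $U$ be the $n\times n$ matrix whose first $r$ rows are $(\alpha^i_{i,j})_{i=1..r,\,j=1..n}$ and whose last $n-r$ rows are $e_{r+1}^T,\dots,e_n^T$; and let $D=\mathrm{diag}\big((\alpha^0\alpha^1)^{-1},\dots,(\alpha^{r-1}\alpha^r)^{-1},0,\dots,0\big)\in F^{n\times n}$. Let $S$ be the $n\times n$ ''flipped identity'' matrix (ones on the antidiagonal, zeros elsewhere). Then $A=LDU$, $L$ is an invertible lower triangular matrix, $U$ is an invertible upper triangular matrix, $V=SLS$ is an invertible upper triangular matrix, and $$SA=V\,(SD)\,U,$$ where $SD$ has at most one nonzero entry in each row and each column; i.e. this is a Bruhat decomposition of $SA$.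
   Context: For $A=(a_{i,j})\in R^{n\times n}$ and integers $k\ge1$, $1\le i,j\le n$, $\alpha^k_{i,j}$ denotes the $k\times k$ minor of $A$ formed by rows $1,\dots,k-1,i$ and columns $1,\dots,k-1,j$ (it is $0$ if $i<k$ or $j<k$). Set $\alpha^0=1$ and $\alpha^k=\alpha^k_{k,k}$. A Bruhat decomposition of a matrix $M$ is a factorization $M=VwU$ with $V,U$ nonsingular upper triangular and $w$ a (possibly weighted) permutation-type matrix, i.e. having at most one nonzero entry in each row and column. *)

From HB Require Import structures.
From mathcomp Require Import all_boot all_order all_algebra all_fingroup.
Set Implicit Arguments. Unset Strict Implicit. Unset Printing Implicit Defensive.
Import Order.TTheory GRing.Theory Num.Theory.
Local Open Scope ring_scope.

(* Indices are 0-based ordinals: the paper's row/column i (1-based) is the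
   ordinal of value i-1. *)

(* Row (resp. column) selection for the minor alpha^k_{i,j}: positions
   0..k-2 are rows/cols 1..k-1 of the paper, position k-1 is i (resp. j). *)
Definition minor_idx (n k : nat) (i : 'I_n) (a : 'I_k) : 'I_n :=
  if (a < k.-1)%N then insubd i (val a) else i.

(* alpha^k_{i,j}: the k x k minor of A with rows 1..k-1,i and columns
   1..k-1,j (paper's 1-based indexing); it is 0 if i < k or j < k
   (1-based), i.e. if val i + 1 < k or val j + 1 < k.
   For k = 0 it is the empty determinant 1. *)
Definition alpha (R : comNzRingType) (n : nat) (A : 'M[R]_n) (k : nat)
    (i j : 'I_n) : R :=
  if ((k <= (val i).+1) && (k <= (val j).+1))%N then
    \det (\matrix_(a < k, b < k) A (minor_idx i a) (minor_idx j b))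
  else 0.

(* alpha^k = alpha^k_{k,k}, and alpha^0 = 1. *)
Definition alpha_diag (R : comNzRingType) (n : nat) (A : 'M[R]_n) (k : nat) : R :=
  if k is k'.+1 then
    (if @insub nat (fun m => (m < n)%N) 'I_n k' is Some i then alpha A k i i
     else 0)
  else 1.

Definition Lmat (R : comNzRingType) (n : nat) (A : 'M[R]_n) (r : nat) : 'M[R]_n :=
  \matrix_(i, j) (if (val j < r)%N then alpha A (val j).+1 i j
                  else (i == j)%:R).

Definition Umat (R : comNzRingType) (n : nat) (A : 'M[R]_n) (r : nat) : 'M[R]_n :=
  \matrix_(i, j) (if (val i < r)%N then alpha A (val i).+1 i j
                  else (i == j)%:R).

Definition Dmat (R : idomainType) (n : nat) (A : 'M[R]_n) (r : nat)
    : 'M[{fraction R}]_n :=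
  \matrix_(i, j) (if (i == j) && (val i < r)%N then
                    (@tofrac R (alpha_diag A (val i) * alpha_diag A (val i).+1))^-1
                  else 0).

Definition flip_mx (R : pzRingType) (n : nat) : 'M[R]_n :=
  \matrix_(i, j) (j == rev_ord i)%:R.

Definition toF (R : idomainType) (n : nat) (M : 'M[R]_n) : 'M[{fraction R}]_n :=
  map_mx (@tofrac R) M.

(* Lower / upper triangular (square) matrices.  MathComp's is_trig_mx means
   A i j = 0 for i < j, i.e. lower triangular. *)
Definition lower_trig (R : pzRingType) (n : nat) (M : 'M[R]_n) : Prop :=
  is_trig_mx M.
Definition upper_trig (R : pzRingType) (n : nat) (M : 'M[R]_n) : Prop :=
  is_trig_mx M^T.

Definition perm_type_mx (R : pzRingType) (n : nat) (w : 'M[R]_n) : Prop :=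
  (forall i j j', w i j != 0 -> w i j' != 0 -> j = j') /\
  (forall j i i', w i j != 0 -> w i' j != 0 -> i = i').

Definition bruhat_decomposition (F : fieldType) (n : nat)
    (M V w U : 'M[F]_n) : Prop :=
  [/\ M = V *m w *m U,
      upper_trig V /\ V \in unitmx,
      upper_trig U /\ U \in unitmx
    & perm_type_mx w].

(* Expanding alpha^{j+1}_{i,j} along its row i writes it as a linear
   combination of the entries of row i of A with coefficients independent of i
   (the cofactors of the leading principal (j+1)-submatrix along its last row).
   Hence L = A C + P and U = C' A + P, where C is upper and C' lower triangular
   and P projects onto the last n - r coordinates.  The sandwich C' A C = U C = C' L
   is then both upper and lower triangular, hence diagonal with entries
   alpha^k alpha^(k+1), so D inverts it on the first r coordinates.  Therefore
   G := C D C' satisfies G A G = G and rank (G A) >= r = rank A, which forces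
   A G A = A, i.e. A = L D U.  Conjugation by the flip S exchanges lower and
   upper triangular matrices and S S = 1, which gives the Bruhat form of S A. *)

From HB Require Import structures.
From mathcomp Require Import all_boot all_algebra.
From mathcomp Require Import zify.
Import GRing.Theory.
Local Open Scope ring_scope.
Set Implicit Arguments. Unset Strict Implicit. Unset Printing Implicit Defensive.

Section Minors.

Variables (R : comNzRingType) (n : nat) (A : 'M[R]_n).

Definition minor_mx (k : nat) (i j : 'I_n) : 'M[R]_k :=
  \matrix_(a < k, b < k) A (minor_idx i a) (minor_idx j b).

Lemma val_minor_idx k (i : 'I_n) (a : 'I_k) :
  val (minor_idx i a) = if (a < k.-1)%N && (a < n)%N then val a else val i.
Proof.
by rewrite /minor_idx; case: ifP => //= _; rewrite val_insubd; case: ifP.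
Qed.

(* For [i < j] the minor has two equal rows, so the guard in [alpha] is harmless. *)
Lemma alpha_succ_det (i j : 'I_n) : alpha A j.+1 i j = \det (minor_mx j.+1 i j).
Proof.
rewrite /alpha leqnn andbT; case: leqP => // lt_ij.
have ltij1 : (i < j.+1)%N by rewrite ltnS ltnW.
apply/esym/(@determinant_alternate _ _ _ (Ordinal ltij1) ord_max).
  by rewrite -val_eqE /= neq_ltn lt_ij.
move=> b; rewrite !mxE; congr (A _ _); apply: val_inj.
by rewrite !val_minor_idx /= lt_ij ltnn /= if_same.
Qed.

(* [minor_mx j.+1 j j] is the leading principal (j+1)-submatrix of [A]; these
   are the cofactors along its last row, padded with zeros beyond column j. *)
Definition lead_cofactor (j m : 'I_n) : R :=
  if (m <= j)%N then cofactor (minor_mx j.+1 j j) ord_max (inord m) else 0.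

Lemma lead_cofactor_eq0 (j m : 'I_n) : (j < m)%N -> lead_cofactor j m = 0.
Proof. by move=> lt_jm; rewrite /lead_cofactor leqNgt lt_jm. Qed.

Lemma alpha_succ_cofactor (i j : 'I_n) :
  alpha A j.+1 i j = \sum_m A i m * lead_cofactor j m.
Proof.
rewrite alpha_succ_det (expand_det_row _ ord_max).
rewrite (bigID (fun m : 'I_n => (m < j.+1)%N)) /=.
rewrite [X in _ = _ + X]big1 ?addr0 => [|m]; last first.
  by rewrite -leqNgt => /lead_cofactor_eq0 ->; rewrite mulr0.
rewrite (big_ord_narrow (ltn_ord j)); apply: eq_bigr => b _.
have lt_bj : (b < j)%N = (b != j :> nat) by rewrite ltn_neqAle -ltnS ltn_ord andbT.
rewrite /lead_cofactor /= -ltnS ltn_ord inord_val; congr (_ * _).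
  have lt_bn : (b < n)%N := leq_trans (ltn_ord b) (ltn_ord j).
  rewrite mxE; congr (A _ _); apply: val_inj; rewrite val_minor_idx /= ?ltnn //.
  by rewrite lt_bj lt_bn andbT; case: eqP.
rewrite /cofactor; congr (_ * \det _); apply/matrixP => a c; rewrite !mxE.
have lt_aj : (a < j)%N := ltn_ord a.
congr (A _ _); apply: val_inj.
by rewrite !val_minor_idx lift_max /= lt_aj (ltn_trans lt_aj (ltn_ord j)).
Qed.

Lemma lead_cofactor_diag (j : 'I_n) : lead_cofactor j j = alpha_diag A j.
Proof.
rewrite /lead_cofactor leqnn.
have -> : inord j = ord_max :> 'I_j.+1 by apply: val_inj; rewrite /= inordK.
rewrite /cofactor -signr_odd addnn odd_double mul1r.
case: j => [[|j] lt_jn] /=; first by rewrite det_mx00.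
rewrite (_ : insub j = Some (Ordinal (ltnW lt_jn))); last exact: insubT.
rewrite /alpha /= leqnn /=; congr (\det _); apply/matrixP => a c; rewrite !mxE.
congr (A _ _); apply: val_inj; rewrite !val_minor_idx /= /bump.
  by have := ltn_ord a; do 2 case: ifP; lia.
by have := ltn_ord c; do 2 case: ifP; lia.
Qed.

Lemma alpha_trmx k (i j : 'I_n) : alpha A k i j = alpha A^T k j i.
Proof.
rewrite /alpha andbC; case: ifP => // _.
by rewrite -det_tr; congr (\det _); apply/matrixP => a b; rewrite !mxE.
Qed.

Lemma alpha_diag_trmx k : alpha_diag A^T k = alpha_diag A k.
Proof. by case: k => //= k; case: insub => // i; rewrite [RHS]alpha_trmx. Qed.

Lemma alpha_diag_ord (k : 'I_n) : alpha_diag A k.+1 = alpha A k.+1 k k.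
Proof. by rewrite /= valK. Qed.

End Minors.


Section SquareMatrices.

Variables (R : pzRingType) (n : nat).
Implicit Types (M N : 'M[R]_n) (i j : 'I_n).

Lemma copid_mxE r i j : copid_mx r i j = ((i == j) && (r <= i)%N)%:R :> R.
Proof.
rewrite !mxE -val_eqE /=; case: (_ == _) => /=; last by rewrite subrr.
by case: leqP; rewrite ?subrr ?subr0.
Qed.

Lemma copid_mx_is_diag r : is_diag_mx (copid_mx r : 'M[R]_n).
Proof. by apply/is_diag_mxP => i j ij; rewrite copid_mxE -val_eqE (negbTE ij). Qed.

Lemma mul_diag_mxEl M N i j : is_diag_mx M -> (M *m N) i j = M i i * N i j.
Proof.
move=> /is_diag_mxP M_diag; rewrite mxE (bigD1 i) //= big1 ?addr0 // => k ki.
by rewrite M_diag ?mul0r // eq_sym.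
Qed.

Lemma mul_diag_mxEr M N i j : is_diag_mx N -> (M *m N) i j = M i j * N j j.
Proof.
move=> /is_diag_mxP N_diag; rewrite mxE (bigD1 j) //= big1 ?addr0 // => k kj.
by rewrite N_diag ?mulr0.
Qed.

Lemma mul_trig_mx M N : is_trig_mx M -> is_trig_mx N -> is_trig_mx (M *m N).
Proof.
move=> /is_trig_mxP M_trig /is_trig_mxP N_trig; apply/is_trig_mxP => i j lt_ij.
rewrite mxE big1 // => k _; case: (ltnP i k) => [/M_trig -> | le_ki].
  by rewrite mul0r.
by rewrite N_trig ?mulr0 // (leq_ltn_trans le_ki lt_ij).
Qed.

Lemma mul_trig_mx_diag M N i :
  is_trig_mx M -> is_trig_mx N -> (M *m N) i i = M i i * N i i.
Proof.
move=> /is_trig_mxP M_trig /is_trig_mxP N_trig.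
rewrite mxE (bigD1 i) //= big1 ?addr0 // => k ki.
case: (ltnP i k) => [/M_trig -> | le_ki]; first by rewrite mul0r.
by rewrite N_trig ?mulr0 // ltn_neqAle le_ki andbT val_eqE.
Qed.

End SquareMatrices.

Section CofactorFactors.

Variables (R : comNzRingType) (n r : nat) (A : 'M[R]_n).

Definition lead_cofactor_mx : 'M[R]_n :=
  \matrix_(m, k) (if (k < r)%N then lead_cofactor A k m else 0).

Lemma lead_cofactor_mx_trig : is_trig_mx lead_cofactor_mx^T.
Proof.
apply/is_trig_mxP => k m lt_km; rewrite !mxE.
by case: ifP => // _; rewrite lead_cofactor_eq0.
Qed.

Lemma Lmat_cofactorE : Lmat A r = A *m lead_cofactor_mx + copid_mx r.
Proof.
apply/matrixP => i j; rewrite [RHS]mxE copid_mxE !mxE.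
have [lt_jr | le_rj] := ltnP j r.
  have -> : (i == j) && (r <= i)%N = false by case: eqP => // ->; rewrite leqNgt lt_jr.
  by rewrite addr0 alpha_succ_cofactor; apply: eq_bigr => m _; rewrite mxE lt_jr.
rewrite big1 ?add0r => [|m _]; last by rewrite mxE ltnNge le_rj mulr0.
by case: eqP => // ->; rewrite le_rj.
Qed.

Lemma Lmat_trig : is_trig_mx (Lmat A r).
Proof.
apply/is_trig_mxP => i j lt_ij; rewrite mxE; case: ifP => _.
  by rewrite /alpha leqNgt ltnS lt_ij.
by rewrite -val_eqE (ltn_eqF lt_ij).
Qed.

Lemma Lmat_diagE (i : 'I_n) :
  Lmat A r i i = if (i < r)%N then alpha_diag A i.+1 else 1.
Proof. by rewrite mxE eqxx alpha_diag_ord. Qed.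

End CofactorFactors.

Lemma Umat_trmx (R : comNzRingType) n r (A : 'M[R]_n) : Umat A r = (Lmat A^T r)^T.
Proof. by apply/matrixP => i j; rewrite !mxE alpha_trmx eq_sym. Qed.

Section CofactorSandwich.

Variables (R : comNzRingType) (n r : nat) (A : 'M[R]_n).

Let C := lead_cofactor_mx r A.
Let Ct := (lead_cofactor_mx r A^T)^T.

Lemma Umat_cofactorE : Umat A r = Ct *m A + copid_mx r.
Proof.
rewrite Umat_trmx Lmat_cofactorE linearD /= trmx_mul trmxK.
by rewrite /copid_mx linearB /= trmx1 tr_pid_mx.
Qed.

Lemma Umat_trig : is_trig_mx (Umat A r)^T.
Proof. by rewrite Umat_trmx trmxK Lmat_trig. Qed.

Lemma Umat_diagE (i : 'I_n) :
  Umat A r i i = if (i < r)%N then alpha_diag A i.+1 else 1.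
Proof. by rewrite Umat_trmx mxE Lmat_diagE alpha_diag_trmx. Qed.

Lemma cofactor_sandwich_Umat : Ct *m A *m C = Umat A r *m C.
Proof.
suff PC0 : copid_mx r *m C = 0 by rewrite Umat_cofactorE mulmxDl PC0 addr0.
apply/matrixP => k l; rewrite mul_diag_mxEl ?copid_mx_is_diag // copid_mxE eqxx.
rewrite !mxE; case: (leqP r k) => [le_rk|_]; last by rewrite /= mul0r.
by case: ifP => [lt_lr|]; rewrite ?lead_cofactor_eq0 ?mulr0 // (leq_trans lt_lr).
Qed.

Lemma cofactor_sandwich_Lmat : Ct *m A *m C = Ct *m Lmat A r.
Proof.
suff CtP0 : Ct *m copid_mx r = 0 by rewrite Lmat_cofactorE mulmxDr CtP0 addr0 mulmxA.
apply/matrixP => k l; rewrite mul_diag_mxEr ?copid_mx_is_diag // copid_mxE eqxx.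
rewrite !mxE; case: (leqP r l) => [le_rl|_]; last by rewrite /= mulr0.
by case: ifP => [lt_kr|]; rewrite ?lead_cofactor_eq0 ?mul0r // (leq_trans lt_kr).
Qed.

Lemma cofactor_sandwich_diag : is_diag_mx (Ct *m A *m C).
Proof.
rewrite is_diag_mxEtrig; apply/andP; split.
  by rewrite cofactor_sandwich_Lmat mul_trig_mx ?Lmat_trig ?lead_cofactor_mx_trig.
by rewrite cofactor_sandwich_Umat trmx_mul mul_trig_mx ?Umat_trig ?lead_cofactor_mx_trig.
Qed.

Lemma cofactor_sandwichE (k : 'I_n) :
  (Ct *m A *m C) k k = if (k < r)%N then alpha_diag A k * alpha_diag A k.+1 else 0.
Proof.
rewrite cofactor_sandwich_Lmat mul_trig_mx_diag ?Lmat_trig ?lead_cofactor_mx_trig //.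
rewrite Lmat_diagE !mxE; case: ifP => _; last by rewrite mul0r.
by rewrite lead_cofactor_diag alpha_diag_trmx.
Qed.

End CofactorSandwich.

(* The row space of [G *m A] lies in that of [A]; equal ranks make them equal. *)
Lemma outer_inverse_inner (F : fieldType) n (A G : 'M[F]_n) :
  G *m A *m G = G -> (\rank A <= \rank (G *m A))%N -> A *m G *m A = A.
Proof.
move=> GAG rankA_le.
have GA_sub : (G *m A <= A)%MS := submxMl G A.
have /submxP[X AE] : (A <= G *m A)%MS.
  by rewrite -(mxrank_leqif_sup GA_sub).2 eqn_leq mxrankS.
rewrite {1}AE (_ : X *m (G *m A) *m G *m A = X *m (G *m A *m G) *m A).
  by rewrite GAG -mulmxA -AE.
by rewrite !mulmxA.
Qed.

Section LDU.

Variables (R : idomainType) (n r : nat) (A : 'M[R]_n).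

Let C := lead_cofactor_mx r A.
Let Ct := (lead_cofactor_mx r A^T)^T.
Let D := Dmat A r.

Lemma Dmat_is_diag : is_diag_mx D.
Proof. by apply/is_diag_mxP => i j ij; rewrite mxE -val_eqE (negbTE ij). Qed.

Lemma mul_pid_Dmat : pid_mx r *m D = D.
Proof.
apply/matrixP => i j; rewrite mul_diag_mxEr ?Dmat_is_diag // !mxE eqxx -val_eqE /=.
case: eqP => [/val_inj -> | _] /=; last by rewrite mul0r.
by case: ifP; rewrite ?mul1r ?mulr0.
Qed.

Lemma mul_Dmat_copid : D *m copid_mx r = 0.
Proof.
apply/matrixP => i j; rewrite mul_diag_mxEl ?Dmat_is_diag // copid_mxE !mxE eqxx.
by case: ltnP; rewrite ?andbF ?mulr0 ?mul0r.
Qed.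

Lemma mul_copid_Dmat : copid_mx r *m D = 0.
Proof.
apply/matrixP => i j; rewrite mul_diag_mxEl ?copid_mx_is_diag // copid_mxE !mxE eqxx.
by case: ltnP; rewrite ?andbF ?mulr0 ?mul0r.
Qed.

Hypothesis alpha_diag_neq0 : forall i : nat, (1 <= i <= r)%N -> alpha_diag A i != 0.

Lemma alpha_diag_prod_neq0 (k : nat) :
  (k < r)%N -> alpha_diag A k * alpha_diag A k.+1 != 0.
Proof.
move=> lt_kr; rewrite mulf_neq0 //; first case: k lt_kr => [|k] lt_kr.
- exact: oner_neq0.
- by apply: alpha_diag_neq0; rewrite /= ltnW.
by apply: alpha_diag_neq0; rewrite lt_kr.
Qed.

Let Dp := toF (Ct *m A *m C).

Lemma Dp_is_diag : is_diag_mx Dp.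
Proof.
have /is_diag_mxP sandwich_diag := cofactor_sandwich_diag r A.
by apply/is_diag_mxP => i j ij; rewrite mxE sandwich_diag ?rmorph0.
Qed.

Lemma mul_Dmat_sandwich : D *m Dp = pid_mx r.
Proof.
apply/matrixP => i j; rewrite mul_diag_mxEl ?Dmat_is_diag //.
have [<- | ij] := eqVneq i j; last first.
  by rewrite (is_diag_mxP Dp_is_diag) ?mulr0 // mxE val_eqE (negbTE ij).
rewrite [Dp i i]mxE cofactor_sandwichE !mxE !eqxx.
case: (ltnP i r) => [lt_ir | _]; last by rewrite mul0r.
by rewrite mulVf // tofrac_eq0 alpha_diag_prod_neq0.
Qed.

Lemma mul_sandwich_Dmat : Dp *m D = pid_mx r.
Proof.
apply/matrixP => i j; rewrite mul_diag_mxEl ?Dp_is_diag //.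
have [<- | ij] := eqVneq i j; last first.
  by rewrite (is_diag_mxP Dmat_is_diag) ?mulr0 // mxE val_eqE (negbTE ij).
rewrite [Dp i i]mxE cofactor_sandwichE !mxE !eqxx.
case: (ltnP i r) => [lt_ir | _]; last by rewrite rmorph0 mul0r.
by rewrite mulfV // tofrac_eq0 alpha_diag_prod_neq0.
Qed.

Hypothesis rank_A : \rank (toF A) = r.

Lemma LDU_decomposition : toF A = toF (Lmat A r) *m D *m toF (Umat A r).
Proof.
have le_rn : (r <= n)%N by rewrite -rank_A rank_leq_row.
have LE : toF (Lmat A r) = toF A *m toF C + copid_mx r.
  by rewrite Lmat_cofactorE /toF map_mxD map_mxM map_copid_mx.
have UE : toF (Umat A r) = toF Ct *m toF A + copid_mx r.
  by rewrite Umat_cofactorE /toF map_mxD map_mxM map_copid_mx.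
have DpE : Dp = toF Ct *m toF A *m toF C by rewrite /Dp /toF !map_mxM.
set G := toF C *m D *m toF Ct.
have GAG : G *m toF A *m G = G.
  have -> : G *m toF A *m G = toF C *m (D *m Dp *m D) *m toF Ct.
    by rewrite DpE /G !mulmxA.
  by rewrite mul_Dmat_sandwich mul_pid_Dmat.
have rank_GA : (\rank (toF A) <= \rank (G *m toF A))%N.
  have PE : toF Ct *m toF A *m (G *m toF A) *m (toF C *m D) = pid_mx r.
    by rewrite -(@pid_mx_id _ n n n r le_rn) -mul_sandwich_Dmat DpE /G !mulmxA.
  rewrite rank_A -{1}(@rank_pid_mx {fraction R} n n r le_rn le_rn) -PE.
  exact: leq_trans (mxrankM_maxl _ _) (mxrankM_maxr _ _).
rewrite LE UE mulmxDl mul_copid_Dmat addr0 mulmxDr -!mulmxA mul_Dmat_copid.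
rewrite !mulmx0 addr0 !mulmxA.
by have := outer_inverse_inner GAG rank_GA; rewrite /G !mulmxA => ->.
Qed.

End LDU.

Lemma map_trig_mx (R S : pzRingType) n (f : R -> S) (M : 'M[R]_n) :
  f 0 = 0 -> is_trig_mx M -> is_trig_mx (map_mx f M).
Proof.
move=> f0 /is_trig_mxP M_trig; apply/is_trig_mxP => i j lt_ij.
by rewrite mxE M_trig.
Qed.

Lemma trig_toF_unitmx (R : idomainType) n (M : 'M[R]_n) :
  is_trig_mx M -> (forall i, M i i != 0) -> toF M \in unitmx.
Proof.
move=> M_trig M_diag; rewrite unitmxE /toF det_map_mx unitfE tofrac_eq0.
by rewrite det_trig //; apply/prodf_neq0 => i _.
Qed.

Section FlipMatrix.

Variables (R : pzRingType) (n : nat).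
Implicit Types (M : 'M[R]_n) (i j : 'I_n).

Let S := flip_mx R n.

Lemma mul_flip_mxE M i j : (S *m M) i j = M (rev_ord i) j.
Proof.
rewrite mxE (bigD1 (rev_ord i)) //= big1 ?addr0 => [|k ki].
  by rewrite mxE eqxx mul1r.
by rewrite mxE (negbTE ki) mul0r.
Qed.

Lemma mul_mx_flipE M i j : (M *m S) i j = M i (rev_ord j).
Proof.
rewrite mxE (bigD1 (rev_ord j)) //= big1 ?addr0 => [|k kj].
  by rewrite mxE rev_ordK eqxx mulr1.
by rewrite mxE -(canF_eq rev_ordK) eq_sym (negbTE kj) mulr0.
Qed.

Lemma flip_mxK : S *m S = 1%:M.
Proof. by apply/matrixP => i j; rewrite mul_flip_mxE !mxE rev_ordK eq_sym. Qed.

Lemma flip_conj_trig M : is_trig_mx M -> is_trig_mx (S *m M *m S)^T.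
Proof.
move=> /is_trig_mxP M_trig; apply/is_trig_mxP => i j lt_ij.
rewrite mxE mul_mx_flipE mul_flip_mxE M_trig //=.
by have := ltn_ord j; lia.
Qed.

Lemma perm_type_flip_diag D : is_diag_mx D -> perm_type_mx (S *m D).
Proof.
move=> /is_diag_mxP D_diag.
have SD_rev i j : (S *m D) i j != 0 -> j = rev_ord i.
  rewrite mul_flip_mxE; have [// | ij] := eqVneq j (rev_ord i).
  by rewrite D_diag ?eqxx // val_eqE eq_sym.
split=> [i j j' /SD_rev -> /SD_rev -> // | j i i' /SD_rev ji /SD_rev ji'].
by apply: rev_ord_inj; rewrite -ji -ji'.
Qed.

End FlipMatrix.

Unset Implicit Arguments.

Theorem corollary2 (R : idomainType) (n r : nat) (A : 'M[R]_n) :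
  \rank (toF A) = r ->
  (1 <= r)%N ->
  (forall i : nat, (1 <= i <= r)%N -> alpha_diag A i != 0) ->
  let L := Lmat A r in
  let U := Umat A r in
  let D := Dmat A r in
  let S := flip_mx {fraction R} n in
  let V := S *m toF L *m S in
  [/\ toF A = toF L *m D *m toF U,
      lower_trig L /\ toF L \in unitmx,
      upper_trig U /\ toF U \in unitmx,
      upper_trig V /\ V \in unitmx
    & [/\ S *m toF A = V *m (S *m D) *m toF U,
           perm_type_mx (S *m D)
         & bruhat_decomposition (S *m toF A) V (S *m D) (toF U)]].
Proof.
move=> rank_A _ alpha_neq0 L U D S V.
have LDU : toF A = toF L *m D *m toF U := LDU_decomposition alpha_neq0 rank_A.
have diag_neq0 (i : 'I_n) : (if (i < r)%N then alpha_diag A i.+1 else 1) != 0.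
  by case: ifP => lt_ir; rewrite ?oner_neq0 // alpha_neq0.
have L_trig : lower_trig L := Lmat_trig r A.
have U_trig : upper_trig U := Umat_trig r A.
have L_unit : toF L \in unitmx.
  by apply: trig_toF_unitmx L_trig _ => i; rewrite Lmat_diagE.
have U_unit : toF U \in unitmx.
  rewrite -unitmx_tr /toF map_trmx; apply: trig_toF_unitmx U_trig _ => i.
  by rewrite mxE Umat_diagE.
have V_trig : upper_trig V := flip_conj_trig (map_trig_mx (rmorph0 _) L_trig).
have V_unit : V \in unitmx.
  have S_unit : S \in unitmx by case/mulmx1_unit: (flip_mxK {fraction R} n).
  by rewrite !unitmx_mul S_unit L_unit.
have SA : S *m toF A = V *m (S *m D) *m toF U.
  by rewrite LDU /V !mulmxA -(mulmxA _ S S) flip_mxK mulmx1.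
have SD_perm : perm_type_mx (S *m D) := perm_type_flip_diag (Dmat_is_diag r A).
have UF_trig : upper_trig (toF U).
  by rewrite /upper_trig /toF map_trmx map_trig_mx ?rmorph0.
split; [exact: LDU | exact: conj L_trig L_unit | exact: conj U_trig U_unit
  | exact: conj V_trig V_unit | split; [exact: SA | exact: SD_perm | ]].
by split; [exact: SA | exact: conj V_trig V_unit | exact: conj UF_trig U_unit | ].
Qed.
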